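(* Let $n\ge2$ and $\Delta\subset B_n$ a proper ideal. Then for all $0\le i\le\lfloor\frac{n-1}{2}\rfloor$, $$g_i(\mathrm{Bier}(B_n,\Delta))=f_i(\Delta)-f_{n-i}(\Delta).$$
   Context: $B_n$ is the Boolean lattice of subsets of $[1,n]$. A proper ideal $\Delta\subset B_n$ is a nonempty family of subsets of $[1,n]$ closed under taking subsets with $[1,n]\notin\Delta$; $f_i(\Delta)$ is the number of sets of cardinality $i$ in $\Delta$. The Bier sphere $\mathrm{Bier}(B_n,\Delta)$ is the simplicial complex whose faces are the pairs $(B,C)$ with $B\subsetneq C\subseteq[1,n]$, $B\in\Delta$, $C\notin\Delta$, with $(B',C')$ a face of $(B,C)$ iff $B'\subseteq B$ and $C\subseteq C'$; the face $(B,C)$ has $|B|+n-|C|$ vertices, and all facets have $n-1$ vertices. For such a complex $\Gamma$, $f_j(\Gamma)$ is the number of faces with $j$ vertices ($f_0=1$), $h_i(\Gamma):=\sum_{j=0}^{n-1}(-1)^{i+j}\binom{n-1-j}{n-1-i}f_j(\Gamma)$ for $0\le i\le n-1$ ($h_i:=0$ otherwise), and $g_i(\Gamma):=h_i(\Gamma)-h_{i-1}(\Gamma)$ for $0\le i\le\lfloor\frac{n-1}2\rfloor$. *)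

From mathcomp Require Import all_boot all_order all_algebra.
Set Implicit Arguments. Unset Strict Implicit. Unset Printing Implicit Defensive.
Import GRing.Theory Num.Theory.

(* B_n = subsets of [1,n], modelled as {set 'I_n}. *)

Definition is_proper_ideal (n : nat) (D : {set {set 'I_n}}) : Prop :=
  [/\ D != set0,
      (forall A B : {set 'I_n}, A \subset B -> B \in D -> A \in D)
    & [set: 'I_n] \notin D].

Definition fIdeal (n : nat) (D : {set {set 'I_n}}) (i : nat) : nat :=
  #|[set A in D | #|A| == i]|.

(* Faces of Bier(B_n, Delta): pairs (B, C), B proper subset of C,
   B in Delta, C not in Delta. *)
Definition bier_face (n : nat) (D : {set {set 'I_n}})
    (p : {set 'I_n} * {set 'I_n}) : bool :=
  [&& p.1 \proper p.2, p.1 \in D & p.2 \notin D].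

Definition bier_nverts (n : nat) (p : {set 'I_n} * {set 'I_n}) : nat :=
  #|p.1| + (n - #|p.2|).


Definition fBier (n : nat) (D : {set {set 'I_n}}) (j : nat) : nat :=
  #|[set p | bier_face D p & @bier_nverts n p == j]|.

Definition hBier (n : nat) (D : {set {set 'I_n}}) (i : nat) : int :=
  if i <= n - 1 then
    (\sum_(0 <= j < n) ((-1) ^+ (i + j) * ('C(n - 1 - j, n - 1 - i))%:Z
                         * (fBier D j)%:Z))%R
  else 0%R.

Definition gBier (n : nat) (D : {set {set 'I_n}}) (i : nat) : int :=
  (hBier D i - (if i is k.+1 then hBier D k else 0))%R.

(* Weight a pair B \subset C by (X - 1)^(|C| - |B| - 1).  A face (B, C) of
   Bier(B_n, Delta) has n - 1 - (|C| - |B| - 1) vertices, so the total weight of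
   the faces is the h-polynomial sum_j f_j (X - 1)^(n - 1 - j), whose
   coefficient of X^(n - 1 - i) is h_i.  As Delta is closed under subsets, the
   faces are the pairs with B in Delta minus the pairs with C in Delta.  By the
   binomial theorem the weights of the supersets of A sum to
   1 + X + ... + X^(n - |A| - 1) and those of its subsets to
   1 + X + ... + X^(|A| - 1), hence
   h_i = #{A in Delta : |A| <= i} - #{A in Delta : |A| >= n - i},
   and taking differences gives g_i. *)

From mathcomp Require Import all_boot all_order all_algebra.
From mathcomp Require Import zify.
Set Implicit Arguments. Unset Strict Implicit. Unset Printing Implicit Defensive.
Import GRing.Theory Num.Theory.

Local Open Scope ring_scope.

Section BinomialPolynomials.

Variable R : comNzRingType.

Lemma coef_XsubC1_exp m k :
  (('X - 1 : {poly R}) ^+ m)`_k = (-1) ^+ (m - k) *+ 'C(m, k).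
Proof.
pose F j : R := (-1) ^+ (m - j) *+ 'C(m, j).
rewrite addrC exprDn coef_sum (eq_bigr (fun i : 'I_m.+1 =>
  if i == k :> nat then F i else 0)); last first.
  move=> i _; rewrite -polyCN -rmorphXn coefMn coefCM coefXn eq_sym.
  by case: eqP => [->|_]; rewrite ?mulr1 ?mulr0 ?mul0rn.
rewrite -big_mkcond big_ord1_eq ltnS /F.
by case: leqP => // /bin_small ->; rewrite mulr0n.
Qed.

Lemma sum_binomial_XsubC1 m :
  \sum_(l < m.+1) ('X - 1 : {poly R}) ^+ l.-1 *+ 'C(m, l) =
  1 + \sum_(k < m) 'X ^+ k.
Proof.
have reg : GRing.lreg ('X - 1 : {poly R}).
  by apply: lreg_lead; rewrite -polyC1 lead_coefXsubC; apply: lreg1.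
have XmE :
    'X ^+ m = 1 + \sum_(i < m) ('X - 1 : {poly R}) ^+ i.+1 *+ 'C(m, i.+1).
  rewrite -{1}(subrK 1 'X) addrC exprDn big_ord_recl /= expr1n mul1r bin0 expr0.
  by congr (_ + _); apply: eq_bigr => i _; rewrite expr1n mul1r.
apply: reg; rewrite mulrDr mulr1 -subrX1 XmE big_ord_recl /= bin0 mulr1n.
rewrite mulrDr mulr1 mulr_sumr [1 + _]addrC addrK; congr (_ + _).
by apply: eq_bigr => i _; rewrite mulrnAr -exprS.
Qed.

Lemma coef_sum_Xn m i : (\sum_(k < m) 'X^k : {poly R})`_i = (i < m)%:R.
Proof.
rewrite coef_sum (eq_bigr (fun k : 'I_m => if k == i :> nat then 1 else 0)).
  by rewrite -big_mkcond (big_ord1_eq _ (fun=> 1)); case: ltnP.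
by move=> k _; rewrite coefXn eq_sym; case: eqP.
Qed.

End BinomialPolynomials.

Section SubsetSums.

Variables (T : finType) (V : nmodType).
Implicit Types (A M : {set T}) (F : nat -> V).

Lemma sum_subsets_card M F :
  \sum_(S : {set T} | S \subset M) F #|S| =
  \sum_(l < #|M|.+1) F l *+ 'C(#|M|, l).
Proof.
rewrite (eq_bigr (fun S : {set T} =>
  \sum_(l < #|M|.+1 | l == #|S| :> nat) F l)); last first.
  by move=> S sSM; rewrite big_ord1_eq ltnS subset_leq_card.
rewrite (exchange_big_dep xpredT) //=; apply: eq_bigr => l _.
rewrite -cards_draws -sumr_const; apply: eq_big => [S|S /andP[_ /eqP->]] //.
by rewrite inE eq_sym.
Qed.

Lemma sum_subsets_card_compl M F :
  \sum_(S : {set T} | S \subset M) F (#|M| - #|S|)%N =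
  \sum_(l < #|M|.+1) F l *+ 'C(#|M|, l).
Proof.
rewrite (sum_subsets_card M (fun l => F (#|M| - l)%N)).
rewrite (reindex_inj rev_ord_inj); apply: eq_bigr => l _.
have hl : (l <= #|M|)%N by rewrite -ltnS.
by rewrite /= subSS subKn // bin_sub.
Qed.

Lemma sum_supersets_card A F :
  \sum_(C : {set T} | A \subset C) F (#|C| - #|A|)%N =
  \sum_(l < #|~: A|.+1) F l *+ 'C(#|~: A|, l).
Proof.
rewrite -sum_subsets_card_compl (reindex_inj (@setC_inj _)) /=.
apply: eq_big => [S|S _]; first by rewrite -subsetC.
by congr F; have := cardsC A; have := cardsC (~: S); rewrite setCK; lia.
Qed.

End SubsetSums.

Lemma max_card_ord n (A : {set 'I_n}) : (#|A| <= n)%N.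
Proof. by rewrite -[X in (_ <= X)%N]card_ord max_card. Qed.

Section BierHPolynomial.

Variables (n : nat) (D : {set {set 'I_n}}).

Definition bier_hpoly : {poly int} :=
  \sum_(j < n) (fBier D j)%:Z *: ('X - 1) ^+ (n - 1 - j).

Lemma hBier_coef k : (k < n)%N -> hBier D k = bier_hpoly`_(n - 1 - k).
Proof.
move=> lt_kn; rewrite /hBier ifT; last by lia.
rewrite /bier_hpoly coef_sum big_mkord; apply: eq_bigr => j _.
rewrite coefZ coef_XsubC1_exp -mulr_natr mulrC.
have lt_jn := ltn_ord j.
have [le_jk|lt_kj] := leqP j k; last by rewrite bin_small ?mulr0 //; lia.
have -> : (n - 1 - j - (n - 1 - k) = k - j)%N by lia.
have -> : (k + j = k - j + j * 2)%N by lia.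
by rewrite exprD exprM sqrr_sign mulr1 natz.
Qed.

Lemma bier_hpoly_faces :
  bier_hpoly = \sum_(p | bier_face D p) ('X - 1) ^+ (#|p.2| - #|p.1|).-1.
Proof.
rewrite /bier_hpoly.
under eq_bigr => j _ do rewrite -natz scaler_nat -sumr_const.
rewrite (exchange_big_dep (bier_face D)) /=; last first.
  by move=> j p _; rewrite inE => /andP[].
apply: eq_bigr => p face_p.
have /and3P[/proper_card lt_BC _ _] := face_p.
have le_Cn := max_card_ord p.2.
have lt_vn : (bier_nverts p < n)%N by rewrite /bier_nverts; lia.
rewrite (big_pred1 (Ordinal lt_vn)) /=; last first.
  by move=> j; rewrite inE face_p /= -val_eqE eq_sym.
rewrite /bier_nverts -subn1; congr (_ ^+ _).
(* Naming the cardinals makes lia see both copies of #|p.1| as one atom. *)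
by move: lt_BC le_Cn; set b := #|p.1|; set c := #|p.2|; lia.
Qed.

Lemma fIdeal_sum k : (fIdeal D k)%:Z = \sum_(A in D) (#|A| == k)%:R.
Proof.
rewrite /fIdeal -sum1_card -natz natr_sum big_mkcond [RHS]big_mkcond.
by apply: eq_bigr => A _; rewrite inE; case: (A \in D); case: (#|A| == k).
Qed.

Local Notation pair := ({set 'I_n} * {set 'I_n})%type.

Hypothesis downD : forall A B : {set 'I_n}, A \subset B -> B \in D -> A \in D.

Lemma sum_bier_faces (V : zmodType) (w : pair -> V) :
  \sum_(p | bier_face D p) w p =
  \sum_(p : pair | (p.1 \subset p.2) && (p.1 \in D)) w p -
  \sum_(p : pair | (p.1 \subset p.2) && (p.2 \in D)) w p.
Proof.
apply/eqP; rewrite eq_sym subr_eq (bigID (fun p => p.2 \in D)) /= addrC.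
apply/eqP; congr (_ + _); apply: eq_bigl => -[B C] /=.
  rewrite /bier_face /= properEneq; case: eqP => [->|_] /=.
    by case: (C \in D); rewrite ?andbF.
  by rewrite andbA.
apply/idP/idP => [/andP[/andP[sBC _] DC] | /andP[sBC DC]].
  by rewrite sBC DC.
by rewrite sBC (downD sBC DC) DC.
Qed.

Lemma bier_hpoly_ideal :
  bier_hpoly = \sum_(A in D) (\sum_(k < n - #|A|) 'X^k - \sum_(k < #|A|) 'X^k).
Proof.
(* d.-1 gives the pairs B = C weight 1 in both sums, where they cancel. *)
pose F d : {poly int} := ('X - 1) ^+ d.-1.
rewrite bier_hpoly_faces sum_bier_faces.
have -> :
    \sum_(p : pair | (p.1 \subset p.2) && (p.1 \in D)) F (#|p.2| - #|p.1|)%N =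
    \sum_(A in D) (1 + \sum_(k < n - #|A|) 'X^k).
  rewrite (eq_bigl (fun p : pair => (p.1 \in D) && (p.1 \subset p.2))); last first.
    by move=> p; rewrite andbC.
  rewrite -(pair_big_dep (mem D) (fun A C : {set 'I_n} => A \subset C)
                         (fun A C : {set 'I_n} => F (#|C| - #|A|)%N)).
  apply: eq_bigr => A _; rewrite sum_supersets_card sum_binomial_XsubC1.
  by rewrite cardsCs setCK card_ord.
have -> :
    \sum_(p : pair | (p.1 \subset p.2) && (p.2 \in D)) F (#|p.2| - #|p.1|)%N =
    \sum_(C in D) (1 + \sum_(k < #|C|) 'X^k).
  rewrite (reindex_inj (can_inj swap_pairK)) /=.
  rewrite (eq_bigl (fun p : pair => (p.1 \in D) && (p.2 \subset p.1))); last first.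
    by move=> p; rewrite andbC.
  rewrite -(pair_big_dep (mem D) (fun C B : {set 'I_n} => B \subset C)
                         (fun C B : {set 'I_n} => F (#|C| - #|B|)%N)).
  by apply: eq_bigr => C _; rewrite sum_subsets_card_compl sum_binomial_XsubC1.
rewrite -sumrB; apply: eq_bigr => A _.
by rewrite opprD addrACA subrr add0r.
Qed.

Lemma hBier_ideal k : (k < n)%N ->
  hBier D k = \sum_(A in D) ((#|A| <= k)%N%:R - (n - k <= #|A|)%N%:R).
Proof.
move=> lt_kn; rewrite hBier_coef // bier_hpoly_ideal coef_sum.
apply: eq_bigr => A _; rewrite coefB !coef_sum_Xn.
have le_An := max_card_ord A.
by congr (_%:R - _%:R); lia.
Qed.

End BierHPolynomial.

Local Close Scope ring_scope.

Theorem theorem9 (n : nat) (D : {set {set 'I_n}}) (i : nat) :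
  2 <= n -> is_proper_ideal D -> i <= (n - 1)./2 ->
  gBier D i = ((fIdeal D i)%:Z - (fIdeal D (n - i))%:Z)%R.
Proof.
move=> le2n [_ downD _] le_i.
have lt_in : (i < n)%N by lia.
rewrite /gBier hBier_ideal // !fIdeal_sum -sumrB.
case: i le_i lt_in => [|k] _ lt_kn; last rewrite hBier_ideal 1?ltnW // -sumrB.
all: rewrite ?subr0; apply: eq_bigr => A _.
all: by have := max_card_ord A; rewrite !natz; lia.
Qed.
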